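(* Consider binary node classification with classes $\{0,1\}$, and let $k\in\{0,1\}$. Let $c_0,c_1\in(0,1)$ be the class homophily parameters, and assume the classes are balanced, i.e. $P(\hat{Y}=0)=P(\hat{Y}=1)$, and the graph is homophilic, i.e. $c_k > 1-c_{1-k}$. Then for any node $i$ with neighborhood $\mathcal{N}(i)$ and observed neighbor labels $\{Y_j=y_j\}_{j\in\mathcal{N}(i)}$, $$P\big(\hat{Y}_i = k \mid \{Y_j=y_j\}_{j\in\mathcal{N}(i)}\big) > 0.5$$ if and only if $$|\mathcal{N}_k(i)| > |\mathcal{N}_{1-k}(i)| \cdot \frac{\log c_{1-k} - \log (1 - c_k)}{\log c_k - \log (1 - c_{1-k})}.$$
   Context: Model: each node $i$ has a (latent/soft) class $\hat{Y}_i\in\{0,1\}$, and each neighbor $j\in\mathcal{N}(i)$ has an observed label $Y_j\in\{0,1\}$. Given $\hat{Y}_i$, the neighbor labels are conditionally independent with $P(Y_j=k\mid \hat{Y}_i=k)=c_k$ and $P(Y_j=1-k\mid\hat{Y}_i=k)=1-c_k$ for $k\in\{0,1\}$ ($c_k$ is called the class homophily of class $k$). The posterior is obtained by Bayes' rule: $P(\hat Y_i=k\mid\{Y_j=y_j\}_{j\in\mathcal N(i)})\propto P(\hat Y_i=k)\prod_{j\in\mathcal N(i)}P(Y_j=y_j\mid \hat Y_i=k)$. Notation: $\mathcal{N}_k(i)=\{j\in\mathcal{N}(i): y_j=k\}$ is the set of neighbors of $i$ with label $k$, and $\mathcal{N}_{1-k}(i)=\{j\in\mathcal{N}(i): y_j=1-k\}$.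 *)

From Stdlib Require Import Reals List.
Import ListNotations.
Open Scope R_scope.

(* Classes are encoded as bool: false = class 0, true = class 1;
   the "other class" 1-k is [negb k]. *)

(* P(Y_j = y | hat Y_i = k) : c_k if y = k, 1 - c_k otherwise. *)
Definition lik (c : bool -> R) (k y : bool) : R :=
  if Bool.eqb y k then c k else 1 - c k.

(* Unnormalized posterior: P(hat Y_i = k) * prod_{j in N(i)} P(Y_j = y_j | hat Y_i = k). *)
Definition joint (prior c : bool -> R) (N : list nat) (y : nat -> bool) (k : bool) : R :=
  prior k * fold_right Rmult 1 (map (fun j => lik c k (y j)) N).

Definition posterior (prior c : bool -> R) (N : list nat) (y : nat -> bool) (k : bool) : R :=
  joint prior c N y k / (joint prior c N y k + joint prior c N y (negb k)).

Definition nbr_class (N : list nat) (y : nat -> bool) (k : bool) : list nat :=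
  filter (fun j => Bool.eqb (y j) k) N.

(** With balanced priors the posterior exceeds 1/2 exactly when the likelihood
    of class [k] beats that of the other class.  Both likelihoods are monomials
    [c^a (1-c)^b] in the neighbour counts, so taking logarithms turns the
    comparison into a linear inequality in the counts; homophily makes the
    coefficient of [|N_k(i)|] positive, and dividing by it gives the threshold. *)
From Stdlib Require Import Reals List Lra.
Open Scope R_scope.

Lemma prod_lik_count (c : bool -> R) (m : bool) (N : list nat) (y : nat -> bool) :
  fold_right Rmult 1 (map (fun j => lik c m (y j)) N) =
  c m ^ length (nbr_class N y m) * (1 - c m) ^ length (nbr_class N y (negb m)).
Proof.
  induction N as [|j N IH]; simpl; [ring|].
  unfold nbr_class in *; simpl.
  destruct (y j), m; unfold lik at 1; simpl; rewrite IH; simpl; ring.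
Qed.

Lemma ratio_gt_half_iff (a b : R) : 0 < a + b -> (a / (a + b) > 1 / 2 <-> b < a).
Proof.
  intros Hs.
  assert (Hq : a / (a + b) * (a + b) = a) by (field; lra).
  split; intros H; nra.
Qed.

Lemma ln_lt_iff (x y : R) : 0 < x -> 0 < y -> (ln x < ln y <-> x < y).
Proof.
  intros Hx Hy; split; [exact (ln_lt_inv x y Hx Hy) | exact (ln_increasing x y Hx)].
Qed.

Lemma ln_pow_mul (x z : R) (a b : nat) :
  0 < x -> 0 < z -> ln (x ^ a * z ^ b) = INR a * ln x + INR b * ln z.
Proof.
  intros Hx Hz.
  rewrite ln_mult by (apply pow_lt; assumption).
  rewrite !ln_pow by assumption; reflexivity.
Qed.

Lemma posterior_gt_half_iff (prior c : bool -> R) (N : list nat) (y : nat -> bool) (k : bool) :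
  0 < joint prior c N y k + joint prior c N y (negb k) ->
  (posterior prior c N y k > 1 / 2 <-> joint prior c N y (negb k) < joint prior c N y k).
Proof. exact (ratio_gt_half_iff _ _). Qed.

(* [p] and [q] play the roles of [c_k] and [c_{1-k}]; [a] and [b] count the
   neighbours labelled [k] and [1-k]. *)
Lemma likelihood_lt_iff (p q : R) (a b : nat) :
  0 < p < 1 -> 0 < q < 1 -> p > 1 - q ->
  (q ^ b * (1 - q) ^ a < p ^ a * (1 - p) ^ b <->
   INR a > INR b * ((ln q - ln (1 - p)) / (ln p - ln (1 - q)))).
Proof.
  intros Hp Hq Hhom.
  assert (HD : 0 < ln p - ln (1 - q)).
  { assert (ln (1 - q) < ln p) by (apply ln_increasing; lra); lra. }
  rewrite <- ln_lt_iff by (apply Rmult_lt_0_compat; apply pow_lt; lra).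
  rewrite !ln_pow_mul by lra.
  assert (Hdiv : INR b * ((ln q - ln (1 - p)) / (ln p - ln (1 - q))) * (ln p - ln (1 - q))
                 = INR b * (ln q - ln (1 - p))) by (field; lra).
  split; intros H; nra.
Qed.

Theorem mainTheorem1 (c prior : bool -> R) (k : bool) (N : list nat) (y : nat -> bool) :
  0 < c false < 1 -> 0 < c true < 1 ->
  (forall b, 0 <= prior b) -> prior false + prior true = 1 ->
  prior false = prior true ->
  c k > 1 - c (negb k) ->
  NoDup N ->
  (posterior prior c N y k > 1 / 2 <->
   INR (length (nbr_class N y k)) >
     INR (length (nbr_class N y (negb k))) *
       ((ln (c (negb k)) - ln (1 - c k)) / (ln (c k) - ln (1 - c (negb k))))).
Proof.
  intros Hc0 Hc1 _ Hsum Hbal Hhom _.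
  assert (Hc : forall b, 0 < c b < 1) by (intros []; assumption).
  assert (Hprior : forall b, prior b = 1 / 2) by (intros []; lra).
  pose proof (Hc k) as Hck; pose proof (Hc (negb k)) as Hcnk.
  rewrite posterior_gt_half_iff; unfold joint;
    rewrite !prod_lik_count, Bool.negb_involutive, !Hprior.
  - rewrite <- likelihood_lt_iff by assumption.
    split; intros H; nra.
  - assert (0 < c k ^ length (nbr_class N y k) * (1 - c k) ^ length (nbr_class N y (negb k)))
      by (apply Rmult_lt_0_compat; apply pow_lt; lra).
    assert (0 < c (negb k) ^ length (nbr_class N y (negb k))
                * (1 - c (negb k)) ^ length (nbr_class N y k))
      by (apply Rmult_lt_0_compat; apply pow_lt; lra).
    lra.
Qed.
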